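(* Let $\mathcal{S}$ be a finite set of road segments and $y_1,\dots,y_N$ (collectively $y_{[N]}$) the routes of $N$ historical trips, each a nonempty set of distinct segments. For each $n$ and $s\in y_n$ one observes $T'_{n,s}=\theta_s+\varepsilon_{n,s}$, where the $\theta_s$ are i.i.d. with mean $\mu$ and variance $\tau^2>0$, independent of the errors; for each $n$ the errors $(\varepsilon_{n,s})_{s\in y_n}$ have mean $0$ and covariances $\sigma_{s,t}$; errors from different trips are independent. Suppose $\sigma_{s,t}\ge0$ for all $s,t\in\mathcal{S}$. Fix a route $y$ and a neighborhood $\delta(y)$ (a set of historical routes) such that $$N_{s\cup t}N^{\delta(y)}_sN^{\delta(y)}_t\le N^{\delta(y)}_{s\cup t}N_sN_t\quad\text{for all } s,t\in y.$$ Let $\hat\Theta^{\ast(\mathrm{seg})}_y$ be the optimal segment-based estimator and $\hat\Theta^{\ast(\mathrm{route})}_y$ the optimal route-based estimator with neighborhood $\delta(y)$. Then for any set of historical routes, $$R\big(\hat\Theta^{\ast(\mathrm{seg})}_y\mid y_{[N]}\big)\le R\big(\hat\Theta^{\ast(\mathrm{route})}_y\mid y_{[N]}\big).$$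
   Context: $N_s=|\{n:s\in y_n\}|$, $N_{s\cup t}=|\{n:s,t\in y_n\}|$, $N^{\delta(y)}_s=|\{n:y_n\in\delta(y),s\in y_n\}|$, $N^{\delta(y)}_{s\cup t}=|\{n:y_n\in\delta(y),s,t\in y_n\}|$, $M_{\delta(y)}=\sum_n\mathbf 1\{y_n\in\delta(y)\}$; convention $0/0=0$. The integrated risk is $R(\hat\Theta_y\mid y_{[N]})=\mathbb{E}[(\hat\Theta_y-\sum_{s\in y}\theta_s)^2\mid y_{[N]}]$, expectation over errors and prior of $\theta$, conditional on the historical routes. A segment-based estimator has the form $\sum_{s\in y}[(1-\phi_s(N_s))\mu+\phi_s(N_s)\sum_{n:s\in y_n}T'_{n,s}/N_s]$ with $\phi_s:\mathbb{Z}_{\ge0}\to\mathbb{R}$, $\phi_s(0)=0$; the optimal one chooses the weights to minimize the integrated risk. A route-based estimator with neighborhood $\delta(y)$ has the form $(1-\phi_{\delta(y)}(M_{\delta(y)}))|y|\mu+\phi_{\delta(y)}(M_{\delta(y)})\sum_{n:y_n\in\delta(y)}\sum_{s\in y_n}T'_{n,s}/M_{\delta(y)}$ with $\phi_{\delta(y)}(0)=0$; the optimal one chooses the weight to minimize the integrated risk. *)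

From HB Require Import structures.
From mathcomp Require Import all_boot all_order all_algebra.
From mathcomp Require Import all_classical all_reals all_analysis.
From mathcomp Require Import finmap.

Set Implicit Arguments.
Unset Strict Implicit.
Unset Printing Implicit Defensive.

Import Order.TTheory GRing.Theory Num.Theory.

Local Open Scope classical_set_scope.
Local Open Scope ring_scope.

Section Defs.
Context {d : measure_display} {T : measurableType d} {R : realType}.

Definition gen_sigma {I : Type} (K : set I) (X : I -> T -> R) : set (set T) :=
  <<s \bigcup_(k in K) preimage_set_system setT (X k) measurable >>.

Definition mutually_independent (P : probability T R) {I : choiceType}
    (G : I -> set (set T)) : Prop :=
  forall (J : {fset I}) (A : I -> set T),
    (forall i, i \in J -> G i (A i)) ->
    P (\bigcap_(i in [set` J]) A i) = (\prod_(i <- J) P (A i))%E.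

Definition independent2 (P : probability T R) (G1 G2 : set (set T)) : Prop :=
  mutually_independent P (fun b : bool => if b then G1 else G2).

Definition same_distribution (P : probability T R) (X Y : T -> R) : Prop :=
  forall B : set R, measurable B -> P (X @^-1` B) = P (Y @^-1` B).

End Defs.

Section Model.
Context {T : Type} {R : realType} {S : finType} {N : nat}.

Definition Ncnt (yr : 'I_N -> {set S}) (s : S) : nat :=
  #|[set n : 'I_N | s \in yr n]|.
Definition Ncnt2 (yr : 'I_N -> {set S}) (s t : S) : nat :=
  #|[set n : 'I_N | (s \in yr n) && (t \in yr n)]|.
Definition Ndcnt (yr : 'I_N -> {set S}) (dl : {set {set S}}) (s : S) : nat :=
  #|[set n : 'I_N | (yr n \in dl) && (s \in yr n)]|.
Definition Ndcnt2 (yr : 'I_N -> {set S}) (dl : {set {set S}}) (s t : S) : nat :=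
  #|[set n : 'I_N | [&& yr n \in dl, s \in yr n & t \in yr n]]|.
Definition Mcnt (yr : 'I_N -> {set S}) (dl : {set {set S}}) : nat :=
  #|[set n : 'I_N | yr n \in dl]|.

Definition Tobs (theta : S -> T -> R) (eps : 'I_N -> S -> T -> R)
    (n : 'I_N) (s : S) : T -> R := fun w => theta s w + eps n s w.

(* segment-based estimator with weights phi_s; division by 0 yields 0
   in MathComp, matching the convention 0/0 = 0 *)
Definition seg_est (yr : 'I_N -> {set S}) (theta : S -> T -> R)
    (eps : 'I_N -> S -> T -> R) (mu : R) (y : {set S})
    (phi : S -> nat -> R) : T -> R := fun w =>
  \sum_(s in y)
     ((1 - phi s (Ncnt yr s)) * mu
      + phi s (Ncnt yr s) *
        ((\sum_(n : 'I_N | s \in yr n) Tobs theta eps n s w) / (Ncnt yr s)%:R)).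

Definition route_est (yr : 'I_N -> {set S}) (theta : S -> T -> R)
    (eps : 'I_N -> S -> T -> R) (mu : R) (y : {set S}) (dl : {set {set S}})
    (phi : nat -> R) : T -> R := fun w =>
  (1 - phi (Mcnt yr dl)) * (#|y|%:R * mu)
  + phi (Mcnt yr dl) *
    ((\sum_(n : 'I_N | yr n \in dl) \sum_(s in yr n) Tobs theta eps n s w)
       / (Mcnt yr dl)%:R).

End Model.

Definition risk {d : measure_display} {T : measurableType d} {R : realType}
    {S : finType} (P : probability T R) (theta : S -> T -> R) (y : {set S})
    (est : T -> R) : \bar R :=
  'E_P[fun w => (est w - \sum_(s in y) theta s w) ^+ 2].

From HB Require Import structures.
From mathcomp Require Import all_boot all_order all_algebra.
From mathcomp Require Import all_classical all_reals all_analysis.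
From mathcomp Require Import finmap measurable_realfun.
From mathcomp Require Import ring zify.

(* Every estimator considered has an estimation error of the form
     b + sum_s alpha_s (theta_s - mu) + sum_(n, s in y_n) beta_(n,s) eps_(n,s),
   so by the independence assumptions its risk is
     b^2 + tau^2 sum_s alpha_s^2
         + sum_n sum_(s,t in y_n) beta_(n,s) beta_(n,t) sigma_(s,t).
   For a route weight phi and M = M_delta(y), the segment weights
   psi_s = phi N^delta_s / M give no bias, the same alpha_s on y and alpha_s = 0
   off y.  Their error term is bounded term by term by the route one: the (s,t)
   terms are sigma_(s,t) (phi/M)^2 times N_(s,t) N^delta_s N^delta_t / (N_s N_t)
   and N^delta_(s,t) respectively, which is exactly the neighbourhood condition. *)

Import Order.TTheory GRing.Theory Num.Theory.
Local Open Scope classical_set_scope.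
Local Open Scope ring_scope.

Lemma card_classicE (I : finType) (Q : pred I) : #|[set i | Q i]| = #|Q|.
Proof. by apply: eq_card => i; exact: asboolb. Qed.

Lemma sum_const_card (R : nzSemiRingType) (I : finType) (Q : pred I) (x : R) :
  \sum_(i | Q i) x = #|[set i | Q i]|%:R * x.
Proof. by rewrite card_classicE sumr_const mulr_natl. Qed.

Lemma Ndcnt_le_Ncnt (S : finType) (N : nat) (yr : 'I_N -> {set S})
    (dl : {set {set S}}) (s : S) :
  (Ndcnt yr dl s <= Ncnt yr s)%N.
Proof.
rewrite /Ndcnt /Ncnt !card_classicE.
by apply: subset_leq_card; apply/fintype.subsetP => n /andP[].
Qed.

Lemma sum_weights_sub_indicator (R : comNzRingType) (S : finType)
    (y : {set S}) (c x : S -> R) (m : R) :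
  \sum_s (c s - (s \in y)%:R) * (x s - m) =
  \sum_s c s * x s - (\sum_s c s) * m - \sum_(s in y) x s + #|y|%:R * m.
Proof.
have sum_indicator (f : S -> R) : \sum_s (s \in y)%:R * f s = \sum_(s in y) f s.
  rewrite [RHS]big_mkcond; apply: eq_bigr => s _.
  by case: (s \in y); rewrite ?mul1r ?mul0r.
rewrite (eq_bigr (fun s => c s * x s - c s * m - (s \in y)%:R * x s
                           + (s \in y)%:R * m)); last by move=> s _; ring.
rewrite !big_split /= !sumrN -mulr_suml !sum_indicator.
by rewrite sumr_const mulr_natl.
Qed.

Section trip_sums.
Context {R : comNzRingType} {S : finType} {N : nat} (yr : 'I_N -> {set S}).

Lemma sum_obs_by_trip (F : 'I_N * S -> R) :
  \sum_(k | k.2 \in yr k.1) F k = \sum_n \sum_(s in yr n) F (n, s).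
Proof. by rewrite pair_big_dep; apply: eq_big => [[n s]|[n s] _]. Qed.

Lemma sum_obs_by_segment (F : 'I_N * S -> R) :
  \sum_(k | k.2 \in yr k.1) F k = \sum_s \sum_(n | s \in yr n) F (n, s).
Proof.
rewrite sum_obs_by_trip; under eq_bigr do rewrite big_mkcond.
by rewrite exchange_big; apply: eq_bigr => s _; rewrite [RHS]big_mkcond.
Qed.

Lemma sum_route_segments (dl : {set {set S}}) (F : S -> R) :
  \sum_(n | yr n \in dl) \sum_(s in yr n) F s = \sum_s (Ndcnt yr dl s)%:R * F s.
Proof.
transitivity (\sum_n \sum_s (if (yr n \in dl) && (s \in yr n) then F s else 0)).
  rewrite big_mkcond; apply: eq_bigr => n _.
  by case: (yr n \in dl); rewrite ?big_mkcond //= big1.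
by rewrite exchange_big; apply: eq_bigr => s _; rewrite -big_mkcond sum_const_card.
Qed.

(* The variance of sum_k be_k eps_k when the errors of one trip have
   covariances sg and different trips are uncorrelated. *)
Definition trip_form (sg : S -> S -> R) (be : 'I_N * S -> R) : R :=
  \sum_(k | k.2 \in yr k.1) \sum_(l | l.2 \in yr l.1)
    be k * be l * (if k.1 == l.1 then sg k.2 l.2 else 0).

Lemma trip_formE sg be :
  trip_form sg be =
  \sum_n \sum_(s in yr n) \sum_(t in yr n) be (n, s) * be (n, t) * sg s t.
Proof.
rewrite /trip_form sum_obs_by_trip; apply: eq_bigr => n _; apply: eq_bigr => s _.
rewrite sum_obs_by_trip (bigD1 n) //= eqxx [X in _ + X]big1 ?addr0 // => m mn.
by apply: big1 => t _; rewrite eq_sym (negbTE mn) mulr0.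
Qed.

Lemma trip_form_separable sg be (u : 'I_N -> R) (v : S -> R) :
  (forall k, be k = u k.1 * v k.2) ->
  trip_form sg be =
  \sum_s \sum_t v s * v t * sg s t * \sum_(n | (s \in yr n) && (t \in yr n)) u n ^+ 2.
Proof.
move=> beE; rewrite trip_formE.
transitivity (\sum_n \sum_s \sum_t
  (if (s \in yr n) && (t \in yr n) then u n ^+ 2 * (v s * v t * sg s t) else 0)).
  apply: eq_bigr => n _; rewrite big_mkcond; apply: eq_bigr => s _.
  case: (s \in yr n) => /=; last by rewrite big1.
  rewrite big_mkcond; apply: eq_bigr => t _.
  by case: (t \in yr n) => //=; rewrite !beE /=; ring.
rewrite exchange_big; apply: eq_bigr => s _; rewrite exchange_big.
apply: eq_bigr => t _; rewrite mulr_sumr [RHS]big_mkcond; apply: eq_bigr => n _.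
by case: ifP => _ //; rewrite mulrC.
Qed.

End trip_sums.

Lemma mul_ratios_le (R : realFieldType) (a c : R) (p q u v r z : nat) :
  0 <= c -> (r * p * q <= z * u * v)%N ->
  a * p%:R / u%:R * (a * q%:R / v%:R) * c * r%:R <= c * (z%:R * a ^+ 2).
Proof.
move=> c_ge0 hpq.
have -> : a * p%:R / u%:R * (a * q%:R / v%:R) * c * r%:R
    = c * a ^+ 2 * ((p * q * r)%:R * (u%:R^-1 * v%:R^-1)) by rewrite !natrM; ring.
have -> : c * (z%:R * a ^+ 2) = c * a ^+ 2 * z%:R by ring.
apply: ler_wpM2l; first by rewrite mulr_ge0 ?sqr_ge0.
have [->|u0] := eqVneq u 0%N; first by rewrite invr0 mul0r mulr0 ler0n.
have [->|v0] := eqVneq v 0%N; first by rewrite invr0 !mulr0 ler0n.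
rewrite -invfM -natrM ler_pdivrMr ?ltr0n ?muln_gt0 ?lt0n ?u0 ?v0 // -natrM ler_nat.
by move: hpq; nia.
Qed.

Lemma trip_form_seg_le_route (R : realFieldType) (S : finType) (N : nat)
    (yr : 'I_N -> {set S}) (y : {set S}) (dl : {set {set S}})
    (sg : S -> S -> R) (a : R) :
  (forall s t, 0 <= sg s t) ->
  (forall s t, s \in y -> t \in y ->
     (Ncnt2 yr s t * Ndcnt yr dl s * Ndcnt yr dl t
      <= Ndcnt2 yr dl s t * Ncnt yr s * Ncnt yr t)%N) ->
  trip_form yr sg
    (fun k => if k.2 \in y then a * (Ndcnt yr dl k.2)%:R / (Ncnt yr k.2)%:R else 0)
  <= trip_form yr sg (fun k => if yr k.1 \in dl then a else 0).
Proof.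
move=> sg_ge0 hcond.
pose g s := if s \in y then a * (Ndcnt yr dl s)%:R / (Ncnt yr s)%:R else 0.
rewrite (trip_form_separable _ _ _ (fun=> 1) g); last by move=> k; rewrite mul1r.
rewrite (trip_form_separable _ _ _ (fun n => if yr n \in dl then a else 0) (fun=> 1));
  last by move=> k; rewrite mulr1.
apply: ler_sum => s _; apply: ler_sum => t _.
have -> : \sum_(n | (s \in yr n) && (t \in yr n)) (if yr n \in dl then a else 0) ^+ 2
    = (Ndcnt2 yr dl s t)%:R * a ^+ 2.
  transitivity (\sum_(n | [&& yr n \in dl, s \in yr n & t \in yr n]) a ^+ 2);
    last exact: sum_const_card.
  rewrite big_mkcond [RHS]big_mkcond; apply: eq_bigr => n _.
  by case: (yr n \in dl); case: (s \in yr n); case: (t \in yr n); rewrite //= expr2 mul0r.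
rewrite expr1n sum_const_card !mul1r /g.
have [sy|sy] := boolP (s \in y); last first.
  by rewrite !mul0r mulr_ge0 // mulr_ge0 ?sqr_ge0.
have [ty|ty] := boolP (t \in y); last first.
  by rewrite mulr0 !mul0r mulr_ge0 // mulr_ge0 ?sqr_ge0.
by rewrite mulr1; exact: mul_ratios_le (sg_ge0 s t) (hcond s t sy ty).
Qed.

Section expectation.
Context {d : measure_display} {T : measurableType d} {R : realType}
  (P : probability T R).
Local Open Scope ereal_scope.

Lemma Lfun2_Lfun1 (X : T -> R) : X \in Lfun P 2%:E -> X \in Lfun P 1.
Proof. exact: (Lfun_subset12 (fin_num_measure P _ measurableT)). Qed.

Definition mfun_of_measurable {d'} {T' : measurableType d'} {f : T -> T'}
    (mf : measurable_fun setT f) : {mfun T >-> T'} :=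
  MeasurableFun.Pack (MeasurableFun.Class (isMeasurableFun.Build _ _ _ _ _ mf)).

Lemma expectation_distribution (X : {mfun T >-> R}) :
  (X : T -> R) \in Lfun P 1 -> 'E_P[X] = \int[distribution P X]_x x%:E.
Proof.
move=> /Lfun1_integrable iX.
by rewrite unlock /distribution integral_pushforward ?preimage_setT.
Qed.

Lemma integrable_distribution (X : {mfun T >-> R}) :
  (X : T -> R) \in Lfun P 1 -> (distribution P X).-integrable setT (fun x => x%:E).
Proof.
move=> /Lfun1_integrable iX; apply: integrable_pushforward => //.
exact: EFin_measurable.
Qed.

Lemma distribution_pair_indep (X Y : {mfun T >-> R})
    (mXY : measurable_fun setT (fun w => (X w, Y w))) :
  (forall A B, measurable A -> measurable B ->
     P (X @^-1` A `&` Y @^-1` B) = P (X @^-1` A) * P (Y @^-1` B)) ->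
  forall A, measurable A ->
    (distribution P X \x distribution P Y) A
    = distribution P (mfun_of_measurable mXY) A.
Proof.
move=> indep; apply: product_measure_unique => A B mA mB.
by rewrite /distribution /pushforward /= -indep.
Qed.

Lemma expectationM_indep (X Y : T -> R) :
  X \in Lfun P 1 -> Y \in Lfun P 1 -> (X \* Y)%R \in Lfun P 1 ->
  (forall A B, measurable A -> measurable B ->
     P (X @^-1` A `&` Y @^-1` B) = P (X @^-1` A) * P (Y @^-1` B)) ->
  'E_P[X \* Y] = 'E_P[X] * 'E_P[Y].
Proof.
move=> X1 Y1 XY1 indep.
have /Lfun1_integrable iXY := XY1.
have /Lfun1_integrable/integrableP[/measurable_EFinP mX _] := X1.
have /Lfun1_integrable/integrableP[/measurable_EFinP mY _] := Y1.
have mXY : measurable_fun setT (fun w => (X w, Y w)) by exact: measurable_fun_pair.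
pose Xm := mfun_of_measurable mX; pose Ym := mfun_of_measurable mY.
pose Z := mfun_of_measurable mXY.
pose f (p : R * R) := (p.1 * p.2)%:E.
have mf : measurable_fun setT f by apply/measurable_EFinP; exact: measurable_funM.
have joint := @distribution_pair_indep Xm Ym mXY indep.
have intZ : (distribution P Z).-integrable setT f.
  by apply: integrable_pushforward => //; rewrite preimage_setT.
have int_prod : (distribution P Xm \x distribution P Ym).-integrable setT f.
  apply/integrableP; split => //.
  rewrite (eq_measure_integral (distribution P Z)); last by move=> A mA _; exact: joint.
  by case/integrableP: intZ.
have -> : 'E_P[X \* Y] = \int[distribution P Xm \x distribution P Ym]_p f p.
  rewrite (eq_measure_integral (distribution P Z)); last by move=> A mA _; exact: joint.
  by rewrite unlock /distribution integral_pushforward ?preimage_setT.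
rewrite -(integral12_prod_meas1 int_prod) /fubini_F /f /=.
have EX := expectation_distribution Xm X1.
have EY := expectation_distribution Ym Y1.
transitivity (\int[distribution P Xm]_x (x%:E * (fine 'E_P[Y])%:E)).
  apply: eq_integral => x _; under eq_integral do rewrite EFinM.
  rewrite integralZl //= ?(integrable_distribution Ym Y1) //.
  by rewrite -EY fineK // expectation_fin_num.
rewrite integralZr //= ?(integrable_distribution Xm X1) //.
by rewrite -EX fineK // expectation_fin_num.
Qed.

Lemma mutually_independent_pair (I : choiceType) (G : I -> set (set T)) (i j : I) :
  i != j -> mutually_independent P G ->
  forall A B, G i A -> G j B -> P (A `&` B) = P A * P B.
Proof.
move=> ij indep A B GA GB.
have ji : (j == i) = false by apply/negbTE; rewrite eq_sym.
have := indep [fset i; j]%fset (fun k => if k == i then A else B).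
rewrite big_fsetU1 /=; last by rewrite !inE.
rewrite big_seq_fset1 eqxx ji => <-.
- congr (P _); apply/seteqP; split => x /=.
    by move=> [Ax Bx] k /=; rewrite !inE => /orP[] /eqP ->; rewrite ?eqxx ?ji.
  move=> H; split; first by have := H i; rewrite /= !inE eqxx /=; apply.
  by have := H j; rewrite /= !inE eqxx orbT ji; apply.
- by move=> k; rewrite !inE => /orP[] /eqP ->; rewrite ?eqxx ?ji.
Qed.

Lemma gen_sigma_preimage {I : Type} (K : set I) (X : I -> T -> R) (k : I)
    (f : R -> R) :
  K k -> measurable_fun setT f -> forall B, measurable B ->
  gen_sigma K X ((fun w => f (X k w)) @^-1` B).
Proof.
move=> Kk mf B mB; apply: sub_sigma_algebra; exists k => //.
exists (f @^-1` B); last by rewrite setTI.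
by rewrite -[X in measurable X]setTI; exact: mf.
Qed.

Lemma expectationM_indep_sigma (G1 G2 : set (set T)) (X Y : T -> R) :
  (forall A B, G1 A -> G2 B -> P (A `&` B) = P A * P B) ->
  (forall B, measurable B -> G1 (X @^-1` B)) ->
  (forall B, measurable B -> G2 (Y @^-1` B)) ->
  X \in Lfun P 2%:E -> Y \in Lfun P 2%:E ->
  'E_P[X \* Y] = 'E_P[X] * 'E_P[Y].
Proof.
move=> indep GX GY X2 Y2; apply: expectationM_indep.
- exact: Lfun2_Lfun1.
- exact: Lfun2_Lfun1.
- exact: Lfun2_mul_Lfun1.
- by move=> A B mA mB; apply: indep; [exact: GX|exact: GY].
Qed.

Lemma lincombE (I : finType) (p : pred I) (a : I -> R) (F : I -> T -> R) :
  (fun w => \sum_(i | p i) a i * F i w)%R = (\sum_(i | p i) a i *: F i)%R.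
Proof. by rewrite fct_sumE. Qed.

Lemma Lfun_lincomb (r : \bar R) (I : finType) (p : pred I) (a : I -> R)
    (F : I -> T -> R) :
  1 <= r -> (forall i, p i -> F i \in Lfun P r) ->
  (fun w => \sum_(i | p i) a i * F i w)%R \in Lfun P r.
Proof.
move=> r1 FL; rewrite lincombE.
by apply: rpred_sum => i pi; apply: rpredZ; exact: FL.
Qed.

Lemma expectation_lincomb (I : finType) (p : pred I) (a : I -> R)
    (F : I -> T -> R) :
  (forall i, p i -> F i \in Lfun P 1) ->
  'E_P[fun w => \sum_(i | p i) a i * F i w]%R =
  (\sum_(i | p i) a i * fine 'E_P[F i])%:E.
Proof.
move=> FL; rewrite lincombE.
suff [_ ->] : ((\sum_(i | p i) a i *: F i) \in Lfun P 1 /\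
  'E_P[\sum_(i | p i) a i *: F i] = (\sum_(i | p i) a i * fine 'E_P[F i])%:E)%R by [].
elim/big_rec2: _ => [|i x g pi [gL Eg]].
  by split; [exact: rpred0|rewrite -[0%R]/(cst 0%R : T -> R) expectation_cst].
have FiL : (a i *: F i)%R \in Lfun P 1 by apply: rpredZ; exact: FL.
split; first exact: rpredD.
rewrite expectationD // Eg (_ : (a i *: F i = a i \o* F i)%R); last first.
  by apply/funext => w /=; rewrite mulrC.
rewrite expectationZl; last exact: FL.
by rewrite -(fineK (expectation_fin_num (FL i pi))) -EFinM -EFinD.
Qed.

Lemma expectation_mul_lincomb (I J : finType) (p : pred I) (q : pred J)
    (a : I -> R) (c : J -> R) (F : I -> T -> R) (G : J -> T -> R) :
  (forall i, p i -> F i \in Lfun P 2%:E) ->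
  (forall j, q j -> G j \in Lfun P 2%:E) ->
  'E_P[fun w => (\sum_(i | p i) a i * F i w) * (\sum_(j | q j) c j * G j w)]%R =
  (\sum_(i | p i) \sum_(j | q j) a i * c j * fine 'E_P[F i \* G j])%:E.
Proof.
move=> FL GL.
have -> : (fun w => (\sum_(i | p i) a i * F i w) * (\sum_(j | q j) c j * G j w))%R =
    (fun w => \sum_(k | p k.1 && q k.2) (a k.1 * c k.2) * (F k.1 \* G k.2) w)%R.
  apply/funext => w; rewrite big_distrlr /= pair_big_dep /=.
  by apply: eq_bigr => k _; rewrite mulrACA.
rewrite expectation_lincomb ?pair_big_dep // => k /andP[pk qk].
by apply: Lfun2_mul_Lfun1; [exact: FL|exact: GL].
Qed.

Lemma expectation_sqr_affine (I : finType) (p : pred I) (b : R) (a : I -> R)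
    (F : I -> T -> R) :
  (forall i, p i -> F i \in Lfun P 2%:E) -> (forall i, p i -> 'E_P[F i] = 0) ->
  'E_P[fun w => (b + \sum_(i | p i) a i * F i w) ^+ 2]%R =
  (b ^+ 2 + \sum_(i | p i) \sum_(j | p j) a i * a j * fine 'E_P[F i \* F j])%:E.
Proof.
move=> FL EF.
pose W w := (\sum_(i | p i) a i * F i w)%R.
have W2 : W \in Lfun P 2%:E by apply: Lfun_lincomb => //; rewrite lee_fin ler1n.
have W1 : W \in Lfun P 1 by exact: Lfun2_Lfun1.
have WW1 : (W \* W)%R \in Lfun P 1 by exact: Lfun2_mul_Lfun1.
have EW : 'E_P[W] = 0.
  rewrite expectation_lincomb => [|i pi]; last exact/Lfun2_Lfun1/FL.
  by rewrite big1 // => i pi; rewrite EF // mulr0.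
transitivity ('E_P[cst (b ^+ 2) \+ ((2 * b) \o* W \+ W \* W)]%R).
  by congr expectation; apply/funext => w /=; rewrite /W; ring.
rewrite expectationD ?Lfun_cst //; last by apply: rpredD => //; exact: Lfun_scale.
rewrite expectationD //; last exact: Lfun_scale.
rewrite expectationZl // EW expectation_cst mule0 add0e EFinD.
by congr (_ + _); exact: expectation_mul_lincomb.
Qed.

End expectation.

Section model.
Context {d : measure_display} {T : measurableType d} {R : realType}
  (P : probability T R) {S : finType} {N : nat} (yr : 'I_N -> {set S})
  (theta : S -> T -> R) (eps : 'I_N -> S -> T -> R)
  (mu tau2 : R) (sigma : S -> S -> R).
Hypotheses (theta_L2 : forall s, theta s \in Lfun P 2%:E)
  (theta_mean : forall s, ('E_P[theta s] = mu%:E)%E)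
  (theta_var : forall s, ('V_P[theta s] = tau2%:E)%E)
  (theta_indep : mutually_independent P (fun s : S => gen_sigma [set s] theta))
  (eps_L2 : forall n s, s \in yr n -> eps n s \in Lfun P 2%:E)
  (eps_mean : forall n s, s \in yr n -> ('E_P[eps n s] = 0)%E)
  (eps_cov : forall n s t, s \in yr n -> t \in yr n ->
     covariance P (eps n s) (eps n t) = (sigma s t)%:E)
  (eps_indep : mutually_independent P
     (fun n : 'I_N => gen_sigma [set s | s \in yr n] (eps n)))
  (theta_eps_indep : independent2 P (gen_sigma setT theta)
     (gen_sigma [set ns : 'I_N * S | ns.2 \in yr ns.1] (fun ns => eps ns.1 ns.2))).

Definition theta_c (s : S) : T -> R := fun w => theta s w - mu.

Lemma theta_c_Lfun2 s : theta_c s \in Lfun P 2%:E.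
Proof.
rewrite (_ : theta_c s = theta s - cst mu) //.
apply: rpredB; first by rewrite lee_fin ler1n.
- by move=> ?; exact: theta_L2.
- by move=> ?; exact: Lfun_cst.
Qed.

Lemma expectation_theta_c s : ('E_P[theta_c s] = 0)%E.
Proof.
rewrite (_ : theta_c s = theta s \- cst mu) //.
rewrite expectationB ?theta_mean ?expectation_cst ?subee ?Lfun_cst //.
exact: Lfun2_Lfun1.
Qed.

Lemma expectation_theta_c_mul s t :
  ('E_P[theta_c s \* theta_c t] = (if s == t then tau2 else 0)%:E)%E.
Proof.
case: eqP => [<-|/eqP st].
  by rewrite -(theta_var s) /variance covariance.unlock theta_mean.
have meas_c u B : measurable B -> gen_sigma [set u] theta (theta_c u @^-1` B).
  apply: (gen_sigma_preimage [set u] theta u (fun x => x - mu)) => //.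
  exact: measurable_funB.
rewrite (expectationM_indep_sigma _ (gen_sigma [set s] theta)
  (gen_sigma [set t] theta)).
- by rewrite !expectation_theta_c mule0.
- exact: mutually_independent_pair theta_indep.
- exact: meas_c.
- exact: meas_c.
- exact: theta_c_Lfun2.
- exact: theta_c_Lfun2.
Qed.

Lemma expectation_theta_c_eps s n t : t \in yr n ->
  ('E_P[theta_c s \* eps n t] = 0)%E.
Proof.
move=> tn.
rewrite (expectationM_indep_sigma _ (gen_sigma setT theta)
  (gen_sigma [set ns : 'I_N * S | ns.2 \in yr ns.1] (fun ns => eps ns.1 ns.2))).
- by rewrite expectation_theta_c mul0e.
- exact: (mutually_independent_pair P _ _ true false isT theta_eps_indep).
- apply: (gen_sigma_preimage setT theta s (fun x => x - mu)) => //.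
  exact: measurable_funB.
- exact: (gen_sigma_preimage [set ns : 'I_N * S | ns.2 \in yr ns.1]
           (fun ns => eps ns.1 ns.2) (n, t) id).
- exact: theta_c_Lfun2.
- exact: eps_L2.
Qed.

Lemma expectation_eps_mul n s m t : s \in yr n -> t \in yr m ->
  ('E_P[eps n s \* eps m t] = (if n == m then sigma s t else 0)%:E)%E.
Proof.
move=> sn tm; case: eqP => [nm|/eqP nm].
  subst m; rewrite -(eps_cov _ _ _ sn tm) covariance.unlock !eps_mean //=.
  by congr expectation; apply/funext => w; rewrite mulrfctE /= !subr0.
have meas_eps k u : u \in yr k -> forall B, measurable B ->
    gen_sigma [set s | s \in yr k] (eps k) (eps k u @^-1` B).
  by move=> uk; exact: (gen_sigma_preimage [set s | s \in yr k] (eps k) u id).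
rewrite (expectationM_indep_sigma _ (gen_sigma [set s | s \in yr n] (eps n))
  (gen_sigma [set s | s \in yr m] (eps m))).
- by rewrite eps_mean // mul0e.
- exact: mutually_independent_pair eps_indep.
- exact: meas_eps.
- exact: meas_eps.
- exact: eps_L2.
- exact: eps_L2.
Qed.

(* The centred prior times and the observed errors, merged into one family
   indexed by S + 'I_N * S so that [expectation_sqr_affine] applies. *)
Definition noise (i : S + 'I_N * S) : T -> R :=
  match i with inl s => theta_c s | inr k => eps k.1 k.2 end.

Definition observed (i : S + 'I_N * S) : bool :=
  if i is inr k then k.2 \in yr k.1 else true.

Definition noise_cov (i j : S + 'I_N * S) : R :=
  match i, j with
  | inl s, inl t => if s == t then tau2 else 0
  | inr k, inr l => if k.1 == l.1 then sigma k.2 l.2 else 0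
  | _, _ => 0
  end.

Lemma noise_Lfun2 i : observed i -> noise i \in Lfun P 2%:E.
Proof. by case: i => [s|[n s]] /= obs; [exact: theta_c_Lfun2|exact: eps_L2]. Qed.

Lemma expectation_noise i : observed i -> ('E_P[noise i] = 0)%E.
Proof. by case: i => [s|[n s]] /= obs; [exact: expectation_theta_c|exact: eps_mean]. Qed.

Lemma expectation_noise_mul i j : observed i -> observed j ->
  fine 'E_P[noise i \* noise j] = noise_cov i j.
Proof.
case: i => [s|[n s]]; case: j => [t|[m t]] /= obs_i obs_j.
- by rewrite expectation_theta_c_mul.
- by rewrite expectation_theta_c_eps.
- rewrite (_ : eps n s \* theta_c t = theta_c t \* eps n s); last first.
    by apply/funext => w /=; rewrite mulrC.
  by rewrite expectation_theta_c_eps.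
- by rewrite expectation_eps_mul.
Qed.

Lemma risk_affine (y : {set S}) (est : T -> R) (b : R) (al : S -> R)
    (be : 'I_N * S -> R) :
  (forall w, est w - \sum_(s in y) theta s w =
     b + \sum_s al s * theta_c s w + \sum_(k | k.2 \in yr k.1) be k * eps k.1 k.2 w) ->
  risk P theta y est = (b ^+ 2 + tau2 * \sum_s al s ^+ 2 + trip_form yr sigma be)%:E.
Proof.
move=> est_err.
pose c i := match i with inl s => al s | inr k => be k end.
transitivity ('E_P[(fun w => (b + \sum_(i | observed i) c i * noise i w) ^+ 2)%R])%E.
  by congr expectation; apply/funext => w; rewrite est_err -addrA big_sumType.
rewrite expectation_sqr_affine; [|exact: noise_Lfun2|exact: expectation_noise].
congr (_%:E); rewrite -addrA; congr (_ + _).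
rewrite (eq_bigr (fun i => \sum_(j | observed j) c i * c j * noise_cov i j));
  last by move=> i obs_i; apply: eq_bigr => j obs_j; rewrite expectation_noise_mul.
rewrite big_sumType /=.
under eq_bigr do rewrite big_sumType /=.
under [X in _ + X]eq_bigr do rewrite big_sumType /=.
congr (_ + _).
  rewrite mulr_sumr; apply: eq_bigr => s _.
  rewrite [X in _ + X]big1 ?addr0; last by move=> k _; rewrite mulr0.
  rewrite (bigD1 s) //= eqxx big1 ?addr0; first by rewrite mulrC expr2.
  by move=> t ts; rewrite eq_sym (negbTE ts) mulr0.
by apply: eq_bigr => k _; rewrite big1 ?add0r // => t _; rewrite mulr0.
Qed.

Lemma seg_est_error (y : {set S}) (psi : S -> nat -> R) w :
  (forall s, psi s 0%N = 0) ->
  seg_est yr theta eps mu y psi w - \sum_(s in y) theta s w =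
  \sum_s (if s \in y then psi s (Ncnt yr s) - 1 else 0) * theta_c s w
  + \sum_(k | k.2 \in yr k.1)
      (if k.2 \in y then psi k.2 (Ncnt yr k.2) / (Ncnt yr k.2)%:R else 0)
      * eps k.1 k.2 w.
Proof.
move=> psi0.
rewrite sum_obs_by_segment -big_split /= /seg_est -sumrB big_mkcond /=.
apply: eq_bigr => s _; case: (s \in y); last first.
  by rewrite mul0r add0r big1 // => n _; rewrite mul0r.
rewrite /Tobs big_split /= sum_const_card -/(Ncnt yr s) -mulr_sumr /theta_c.
(* an unobserved segment is estimated by mu, since psi_s(0) = 0 and x / 0 = 0 *)
have [->|N0] := eqVneq (Ncnt yr s) 0%N; first by rewrite psi0; ring.
by field; rewrite pnatr_eq0.
Qed.

Lemma route_est_error (y : {set S}) (dl : {set {set S}}) (phi : nat -> R) w :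
  let a := phi (Mcnt yr dl) / (Mcnt yr dl)%:R in
  route_est yr theta eps mu y dl phi w - \sum_(s in y) theta s w =
  mu * (a * \sum_s (Ndcnt yr dl s)%:R - phi (Mcnt yr dl) * #|y|%:R)
  + \sum_s (a * (Ndcnt yr dl s)%:R - (s \in y)%:R) * theta_c s w
  + \sum_(k | k.2 \in yr k.1) (if yr k.1 \in dl then a else 0) * eps k.1 k.2 w.
Proof.
move=> a.
have eps_part : \sum_(k | k.2 \in yr k.1) (if yr k.1 \in dl then a else 0) * eps k.1 k.2 w
    = a * \sum_(n | yr n \in dl) \sum_(s in yr n) eps n s w.
  rewrite sum_obs_by_trip mulr_sumr [RHS]big_mkcond; apply: eq_bigr => n _.
  case: (yr n \in dl); first by rewrite mulr_sumr.
  by rewrite big1 // => s _; rewrite mul0r.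
rewrite eps_part (sum_weights_sub_indicator _ _ y (fun s => a * (Ndcnt yr dl s)%:R)
  (fun s => theta s w)) -mulr_sumr.
have -> : \sum_s a * (Ndcnt yr dl s)%:R * theta s w
    = a * \sum_s (Ndcnt yr dl s)%:R * theta s w.
  by rewrite mulr_sumr; apply: eq_bigr => s _; rewrite mulrA.
rewrite /route_est /Tobs; under eq_bigr do rewrite big_split.
by rewrite big_split /= sum_route_segments /a; ring.
Qed.

Definition seg_weights_of_route (dl : {set {set S}}) (phi : nat -> R) : S -> nat -> R :=
  fun s k => if k == 0%N then 0
             else phi (Mcnt yr dl) / (Mcnt yr dl)%:R * (Ndcnt yr dl s)%:R.

Lemma seg_weights_of_routeN dl phi s :
  seg_weights_of_route dl phi s (Ncnt yr s)
  = phi (Mcnt yr dl) / (Mcnt yr dl)%:R * (Ndcnt yr dl s)%:R.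
Proof.
rewrite /seg_weights_of_route; case: eqP => // N0.
have := Ndcnt_le_Ncnt _ _ yr dl s; rewrite N0 leqn0 => /eqP ->.
by rewrite mulr0.
Qed.

Lemma risk_seg_weights_of_route_le (y : {set S}) (dl : {set {set S}}) (phi : nat -> R) :
  0 <= tau2 -> (forall s t, 0 <= sigma s t) ->
  (forall s t, s \in y -> t \in y ->
     (Ncnt2 yr s t * Ndcnt yr dl s * Ndcnt yr dl t
      <= Ndcnt2 yr dl s t * Ncnt yr s * Ncnt yr t)%N) ->
  (risk P theta y (seg_est yr theta eps mu y (seg_weights_of_route dl phi))
   <= risk P theta y (route_est yr theta eps mu y dl phi))%E.
Proof.
move=> tau2_ge0 sigma_ge0 hcond.
set a := phi (Mcnt yr dl) / (Mcnt yr dl)%:R.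
have seg_err w :
    seg_est yr theta eps mu y (seg_weights_of_route dl phi) w - \sum_(s in y) theta s w
    = 0 + \sum_s (if s \in y then a * (Ndcnt yr dl s)%:R - 1 else 0) * theta_c s w
      + \sum_(k | k.2 \in yr k.1)
          (if k.2 \in y then a * (Ndcnt yr dl k.2)%:R / (Ncnt yr k.2)%:R else 0)
          * eps k.1 k.2 w.
  rewrite add0r seg_est_error //.
  by congr (_ + _); apply: eq_bigr => i _; rewrite seg_weights_of_routeN.
rewrite (risk_affine _ _ _ _ _ seg_err).
rewrite (risk_affine _ _ _ _ _ (route_est_error y dl phi)) lee_fin.
apply: lerD; first apply: lerD.
- by rewrite expr2 mul0r sqr_ge0.
- apply: ler_wpM2l => //; apply: ler_sum => s _.
  by case: (s \in y); rewrite // expr2 mul0r sqr_ge0.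
- exact: trip_form_seg_le_route.
Qed.

End model.

Theorem theorem2p5
  (d : measure_display) (T : measurableType d) (R : realType)
  (P : probability T R)
  (S : finType) (N : nat) (yr : 'I_N -> {set S})
  (theta : S -> T -> R) (eps : 'I_N -> S -> T -> R)
  (mu tau2 : R) (sigma : S -> S -> R)
  (y : {set S}) (dl : {set {set S}})
  (phiS : S -> nat -> R) (phiR : nat -> R) :
  (* historical routes are nonempty sets of segments; y is a route *)
  (forall n, yr n != finset.set0) ->
  y != finset.set0 ->
  (* prior: theta_s i.i.d. with mean mu and variance tau2 > 0 *)
  0 < tau2 ->
  (forall s, theta s \in Lfun P 2%:E) ->
  (forall s, ('E_P[theta s] = mu%:E)%E) ->
  (forall s, ('V_P[theta s] = tau2%:E)%E) ->
  (forall s t, same_distribution P (theta s) (theta t)) ->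
  mutually_independent P (fun s : S => gen_sigma [set s] theta) ->
  (* errors: mean 0, covariances sigma_{s,t} within a trip *)
  (forall n s, s \in yr n -> eps n s \in Lfun P 2%:E) ->
  (forall n s, s \in yr n -> ('E_P[eps n s] = 0)%E) ->
  (forall n s t, s \in yr n -> t \in yr n ->
     covariance P (eps n s) (eps n t) = (sigma s t)%:E) ->
  (* errors from different trips are independent *)
  mutually_independent P
    (fun n : 'I_N => gen_sigma [set s | s \in yr n] (eps n)) ->
  (* theta independent of the errors *)
  independent2 P (gen_sigma setT theta)
    (gen_sigma [set ns : 'I_N * S | ns.2 \in yr ns.1]
               (fun ns => eps ns.1 ns.2)) ->
  (* nonnegative covariances *)
  (forall s t, 0 <= sigma s t) ->
  (* condition on the neighborhood *)
  (forall s t, s \in y -> t \in y ->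
     (Ncnt2 yr s t * Ndcnt yr dl s * Ndcnt yr dl t
      <= Ndcnt2 yr dl s t * Ncnt yr s * Ncnt yr t)%N) ->
  (* phiS gives the optimal segment-based estimator *)
  (forall s, phiS s 0%N = 0) ->
  (forall psi : S -> nat -> R, (forall s, psi s 0%N = 0) ->
     (risk P theta y (seg_est yr theta eps mu y phiS)
      <= risk P theta y (seg_est yr theta eps mu y psi))%E) ->
  (* phiR gives the optimal route-based estimator with neighborhood dl *)
  phiR 0%N = 0 ->
  (forall psi : nat -> R, psi 0%N = 0 ->
     (risk P theta y (route_est yr theta eps mu y dl phiR)
      <= risk P theta y (route_est yr theta eps mu y dl psi))%E) ->
  (risk P theta y (seg_est yr theta eps mu y phiS)
   <= risk P theta y (route_est yr theta eps mu y dl phiR))%E.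
Proof.
move=> _ _ tau2_gt0 theta_L2 theta_mean theta_var _ theta_indep eps_L2 eps_mean
  eps_cov eps_indep theta_eps_indep sigma_ge0 hcond _ seg_opt _ _.
apply: le_trans (seg_opt (seg_weights_of_route yr dl phiR) (fun s => erefl)) _.
apply: (@risk_seg_weights_of_route_le _ _ _ P _ _ yr theta eps mu tau2 sigma) => //.
exact: ltW.
Qed.
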